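(* Let $p$ be an odd prime and let $1\le \ell\le p-1$ be such that the Legendre symbol $\left(\frac{4\ell+1}{p}\right)=-1$. Then for all $n\ge0$, $$b\big(2(pn+\ell)\big)\equiv 0\pmod 4.$$ Furthermore, for every odd prime $p$ and all $n,k\ge0$, $$b\!\left(2p^{2k+2}n+\frac{p^{2k+2}-1}{2}\right)\equiv (-1)^{\frac{(k+1)(p-1)}{2}}\,p^{k+1}\,b(2n)\pmod 4.$$
   Context: The mock theta function $\mathcal{B}(q)=\sum_{n\ge0}\frac{q^n(-q;q^2)_n}{(q;q^2)_{n+1}}=\sum_{n\ge0}b(n)q^n$, where $(a;q)_n=\prod_{j=0}^{n-1}(1-aq^j)$. (The paper writes the second congruence equivalently as $b(2n)\equiv(-1)^{\frac{(k+1)(1-p)}{2}}p^{-k-1}b(\cdot)\pmod 4$, with $p^{-1}$ the inverse of $p$ modulo $4$.) *)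

From mathcomp Require Import all_boot all_order all_algebra intdiv.
Set Implicit Arguments. Unset Strict Implicit. Unset Printing Implicit Defensive.
Import GRing.Theory Num.Theory.
Local Open Scope ring_scope.

(* Truncation of the geometric series 1/(1 - q^k) to the terms of degree
   k*i with i <= N. *)
Definition geomN (k N : nat) : {poly int} := \sum_(i < N.+1) 'X^(k * i).

Definition negq_q2 (m : nat) : {poly int} := \prod_(j < m) (1 + 'X^(2 * j + 1)).

(* 1/(q;q^2)_{m+1} = prod_{j<=m} 1/(1 - q^(2j+1)), truncated (exact in degrees <= N) *)
Definition inv_q_q2 (m N : nat) : {poly int} := \prod_(j < m.+1) geomN (2 * j + 1) N.

(* b(n): coefficient of q^n in B(q) = sum_{m>=0} q^m (-q;q^2)_m/(q;q^2)_{m+1}.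
   Terms with m > n only contribute in degrees > n, and the truncated
   geometric series are exact in degrees <= n. *)
Definition b (n : nat) : int :=
  (\sum_(m < n.+1) 'X^m * negq_q2 m * inv_q_q2 m n)`_n.

Definition legendre (a p : nat) : int :=
  if (p %| a)%N then 0
  else if [exists x : 'I_p, (x ^ 2 == a %[mod p])%N] then 1 else -1.

(* Modulo 4 each factor (1 + q^k)/(1 - q^k) of B(q) equals 1 + 2(q^k + q^(2k) + ...),
   and a product of factors 1 + 2h_j is 1 + 2(sum h_j).  Reading off coefficients,
   b(n) = A(n) + 2B(n) (mod 4), where A(n) counts the factorisations
   2n+1 = (2m+1)(2i+1) and B(n) the solutions of
   2n+1 = (2j+1)(2i+1) + 2(e+1)(2i+1) + 2(l+1)(2j+1).
   A(n) is symmetric in (m, i), so it is its diagonal [2n+1 is a square] plus twice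
   its strictly upper half; B(n) is symmetric under (j, e) <-> (i, l), so it is
   congruent to its diagonal modulo 2.  When n is even, 2n+1 = 1 (mod 4) forces the
   two cofactors of an upper pair to differ by a positive multiple of 4, which makes
   the upper half of A equal to the diagonal of B.  Hence b(2N) = [4N+1 is a square]
   (mod 4).  Both claims follow: 4(pn+l)+1 is congruent to the non-residue 4l+1
   modulo p, and with q = p^(k+1) the index 2N = 2q^2 n + (q^2-1)/2 gives
   4N+1 = q^2(4n+1), while (-1)^((p-1)/2) p = 1 (mod 4). *)

From mathcomp Require Import all_boot all_order all_algebra intdiv.
From mathcomp Require Import ring zify.
Import GRing.Theory Num.Theory.
Set Implicit Arguments. Unset Strict Implicit. Unset Printing Implicit Defensive.

Lemma big_ord_widen_vanish K M (h : nat -> nat) : K <= M ->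
    (forall t, K <= t -> h t = 0) ->
  \sum_(t < K) h t = \sum_(t < M) h t.
Proof.
move=> leKM hK; rewrite (big_ord_widen M h leKM) big_mkcond /=.
by apply: eq_bigr => t _; case: ifP => // /negbT; rewrite -leqNgt => /hK.
Qed.

Lemma sum_shift_gt K j (G : nat -> nat) : (forall m, K <= m -> G m = 0) ->
  \sum_(m < K) (if j < m then G m else 0) = \sum_(e < K) G (j + e + 1).
Proof.
move=> hK.
rewrite (@big_ord_widen_vanish K (j.+1 + K) (fun m => if j < m then G m else 0));
  last 2 first.
- by rewrite leq_addl.
- by move=> t /hK ->; case: ifP.
rewrite big_split_ord /= big1 ?add0n; last first.
  by move=> i _; rewrite ltnNge -ltnS ltn_ord.
apply: eq_bigr => e _; rewrite /= ifT; first by congr G; lia.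
by rewrite ltnS leq_addr.
Qed.

Lemma sum_ord_double K (h : nat -> nat) :
  \sum_(t < K.*2) h t = \sum_(e < K) (h e.*2 + h e.*2.+1).
Proof.
elim: K => [|K IH]; first by rewrite !big_ord0.
by rewrite doubleS !big_ord_recr /= IH addnA.
Qed.

Lemma sum_odd_support K (h : nat -> nat) :
    (forall e, h e.*2 = 0) -> (forall t, K <= t -> h t = 0) ->
  \sum_(t < K) h t = \sum_(e < K) h e.*2.+1.
Proof.
move=> h_even hK.
rewrite (@big_ord_widen_vanish K K.*2) // ?sum_ord_double; last first.
  by rewrite -addnn leq_addr.
by apply: eq_bigr => e _; rewrite h_even.
Qed.

Lemma sum_sym_ord K (F : nat -> nat -> nat) : (forall u v, F u v = F v u) ->
  \sum_(u < K) \sum_(v < K) F u v =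
  \sum_(u < K) F u u + 2 * \sum_(u < K) \sum_(v < K) (if u < v then F u v else 0).
Proof.
move=> F_sym; elim: K => [|K IH]; first by rewrite !big_ord0.
rewrite !big_ord_recr /= ltnn.
have -> : \sum_(u < K) \sum_(v < K.+1) F u v =
    \sum_(u < K) \sum_(v < K) F u v + \sum_(u < K) F u K.
  by rewrite -big_split /=; apply: eq_bigr => u _; rewrite big_ord_recr.
have -> : \sum_(u < K) \sum_(v < K.+1) (if u < v then F u v else 0) =
    \sum_(u < K) \sum_(v < K) (if u < v then F u v else 0) + \sum_(u < K) F u K.
  by rewrite -big_split /=; apply: eq_bigr => u _; rewrite big_ord_recr /= ltn_ord.
rewrite [\sum_(v < K) (if K < v then _ else _)]big1 => [|v _]; last first.
  by rewrite ltnNge ltnW.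
under [\sum_(v < K) F K v]eq_bigr do rewrite F_sym.
rewrite IH; ring.
Qed.

Lemma sum_sym_seq (T : Type) (s : seq T) (F : T -> T -> nat) :
    (forall u v, F u v = F v u) ->
  exists W, \sum_(u <- s) \sum_(v <- s) F u v = \sum_(u <- s) F u u + 2 * W.
Proof.
move=> F_sym; elim: s => [|x s [W IH]]; first by exists 0; rewrite !big_nil.
exists (W + \sum_(v <- s) F x v); rewrite !big_cons.
have -> : \sum_(u <- s) \sum_(v <- x :: s) F u v =
    \sum_(v <- s) F x v + \sum_(u <- s) \sum_(v <- s) F u v.
  by rewrite -big_split /=; apply: eq_bigr => u _; rewrite big_cons F_sym.
rewrite IH; ring.
Qed.

Lemma odd_half_eq m : odd m -> m = 2 * m./2 + 1.
Proof. by move=> odd_m; rewrite -[LHS](odd_double_half m) odd_m addnC -muln2 mulnC. Qed.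

Definition issq (m : nat) : bool := [exists x : 'I_m.+1, x * x == m].

Lemma issqP m : reflect (exists x, x * x = m) (issq m).
Proof.
apply: (iffP existsP) => [[x /eqP]|[x xx_m]]; first by exists x.
have lt_x_m1 : x < m.+1.
  by rewrite ltnS -xx_m; case: x {xx_m} => // x; rewrite leq_pmulr.
by exists (Ordinal lt_x_m1); rewrite /= xx_m.
Qed.

Lemma issq_mulsq q m : 0 < q -> issq (q * q * m) = issq m.
Proof.
move=> q_gt0; apply/issqP/issqP => [[x xx]|[y <-]]; last by exists (q * y); ring.
have : q ^ 2 %| x ^ 2 by rewrite !expnS !expn0 !muln1 xx dvdn_mulr.
rewrite dvdn_pexp2r // => /dvdnP[y def_x]; exists y.
apply/eqP; rewrite -(@eqn_pmul2l (q * q)) ?muln_gt0 ?q_gt0 // -xx def_x.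
by apply/eqP; ring.
Qed.

Definition divpair (n m i : nat) : bool := (2 * m + 1) * (2 * i + 1) == 2 * n + 1.

Definition ndivpairs (n : nat) : nat := \sum_(m < n.+1) \sum_(i < n.+1) divpair n m i.

Definition quad_eq (n j e i l : nat) : bool :=
  (2 * j + 1) * (2 * i + 1) + 2 * (e + 1) * (2 * i + 1) + 2 * (l + 1) * (2 * j + 1)
    == 2 * n + 1.

Definition nquads (n : nat) : nat :=
  \sum_(j < n.+1) \sum_(e < n.+1) \sum_(i < n.+1) \sum_(l < n.+1) quad_eq n j e i l.

Lemma eqn_double_add1 n x : (n == x) = (2 * n + 1 == 2 * x + 1).
Proof. by rewrite eqn_add2r eqn_pmul2l. Qed.

Lemma ndivpairsE n :
  \sum_(m < n.+1) \sum_(i < n.+1) (n == m + (2 * m + 1) * i) = ndivpairs n.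
Proof.
apply: eq_bigr => m _; apply: eq_bigr => i _.
rewrite eqn_double_add1 eq_sym /divpair.
by have -> : 2 * (m + (2 * m + 1) * i) + 1 = (2 * m + 1) * (2 * i + 1) by ring.
Qed.

(* Substitute [m = j + e + 1]; the terms with [l = n] vanish. *)
Lemma nquadsE n :
  \sum_(m < n.+1) \sum_(j < m) \sum_(i < n.+1) \sum_(l < n)
    (n == m + (2 * m + 1) * i + (2 * j + 1) * l.+1) = nquads n.
Proof.
pose G j m := \sum_(i < n.+1) \sum_(l < n) (n == m + (2 * m + 1) * i + (2 * j + 1) * l.+1).
transitivity (\sum_(m < n.+1) \sum_(j < n.+1) (if j < m then G j m else 0)).
  apply: eq_bigr => m _.
  by rewrite (big_ord_widen n.+1 (G^~ m) (ltnW (ltn_ord m))) big_mkcond.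
rewrite exchange_big /=; apply: eq_bigr => j _.
rewrite (@sum_shift_gt n.+1 j (G j)); last first.
  move=> m le_n1_m; rewrite /G big1 // => i _; rewrite big1 // => l _.
  by case: eqP => // def_n; move: le_n1_m; rewrite def_n -!addnA ltnNge leq_addr.
apply: eq_bigr => e _; rewrite /G; apply: eq_bigr => i _; rewrite big_ord_recr /=.
have -> : quad_eq n j e i n = false.
  apply/negbTE; rewrite neq_ltn; apply/orP; right.
  have : 0 < 2 * j + 1 by rewrite addn1.
  by nia.
rewrite addn0; apply: eq_bigr => l _.
rewrite eqn_double_add1 eq_sym /quad_eq.
by congr (nat_of_bool (_ == _)); ring.
Qed.

Lemma sum_odd_sq n :
  \sum_(m < n.+1) ((2 * m + 1) * (2 * m + 1) == 2 * n + 1) = issq (2 * n + 1).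
Proof.
have [[x xx]|no_sq] := altP (issqP (2 * n + 1)); last first.
  rewrite big1 // => m _; case: eqP => // mm; case/negP: no_sq.
  by apply/issqP; exists (2 * m + 1).
have odd_x : odd x by move: (congr1 odd xx); rewrite oddM andbb addn1 oddS oddM.
have def_x := odd_half_eq odd_x.
have lt_h_n1 : x./2 < n.+1 by nia.
rewrite (bigD1 (Ordinal lt_h_n1)) //= -def_x xx eqxx big1 // => m /eqP ne_m_h.
case: eqP => // mm; case: ne_m_h; apply: val_inj => /=.
have : (2 * m + 1) ^ 2 == x ^ 2 by rewrite !expnS !expn0 !muln1 mm xx.
by rewrite eqn_sqr def_x => /eqP; lia.
Qed.

Lemma quad_eq_sym n j e i l : quad_eq n j e i l = quad_eq n i l j e.
Proof. by rewrite /quad_eq; congr (_ == _); ring. Qed.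

Lemma nquads_diag_mod2 n :
  exists W, nquads n = \sum_(j < n.+1) \sum_(e < n.+1) quad_eq n j e j e + 2 * W.
Proof.
have [W sumW] := @sum_sym_seq _ (index_enum ('I_n.+1 * 'I_n.+1)%type)
  (fun u v => quad_eq n u.1 u.2 v.1 v.2)
  (fun u v => congr1 nat_of_bool (quad_eq_sym n u.1 u.2 v.1 v.2)).
exists W; rewrite /nquads pair_big /=.
under eq_bigr do rewrite pair_big /=.
by rewrite [X in _ = X + _]pair_big.
Qed.

Lemma offdiag_divpairs n : ~~ odd n ->
  \sum_(m < n.+1) \sum_(i < n.+1) (if m < i then nat_of_bool (divpair n m i) else 0) =
  \sum_(j < n.+1) \sum_(e < n.+1) quad_eq n j e j e.
Proof.
move=> even_n; apply: eq_bigr => m _.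
have divpair_high i : n.+1 <= i -> nat_of_bool (divpair n m i) = 0.
  by move=> lt_n_i; rewrite /divpair; case: eqP => // mi; nia.
rewrite (@sum_shift_gt n.+1 m (fun i => nat_of_bool (divpair n m i))) //.
rewrite (@sum_odd_support n.+1 (fun t => nat_of_bool (divpair n m (m + t + 1))));
  first last.
- by move=> t le_n1_t; apply: divpair_high; lia.
- move=> e; rewrite /divpair; case: eqP => // me.
  have def_n : n = n./2 * 2 by rewrite -[LHS](odd_double_half n) (negbTE even_n) muln2.
  have : (2 * m + 1) * (2 * (m + e.*2 + 1) + 1) = 4 * (m * m + 2 * m * e + 2 * m + e) + 3.
    by rewrite -muln2; ring.
  by rewrite me; lia.
apply: eq_bigr => e _; rewrite /divpair /quad_eq.
by congr (nat_of_bool (_ == _)); rewrite -addn1 -muln2; ring.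
Qed.

Lemma ndivpairs_nquads_mod4 n : ~~ odd n ->
  exists W, ndivpairs n + 2 * nquads n = issq (2 * n + 1) + 4 * W.
Proof.
move=> even_n; have [W nquadsW] := nquads_diag_mod2 n.
have divpair_sym u v : nat_of_bool (divpair n u v) = divpair n v u by rewrite /divpair mulnC.
exists (\sum_(j < n.+1) \sum_(e < n.+1) quad_eq n j e j e + W).
rewrite /ndivpairs (sum_sym_ord _ divpair_sym) offdiag_divpairs // nquadsW.
rewrite -sum_odd_sq; ring.
Qed.

Local Open Scope ring_scope.

Section Truncation.

Variables (R : nzRingType) (n : nat).
Implicit Types p q : {poly R}.

Definition eq_upto p q := forall i, (i <= n)%N -> p`_i = q`_i.

Lemma eq_uptoD p p' q q' : eq_upto p p' -> eq_upto q q' -> eq_upto (p + q) (p' + q').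
Proof. by move=> pp' qq' i le_i_n; rewrite !coefD pp' ?qq'. Qed.

Lemma eq_uptoM p p' q q' : eq_upto p p' -> eq_upto q q' -> eq_upto (p * q) (p' * q').
Proof.
move=> pp' qq' i le_i_n; rewrite !coefM; apply: eq_bigr => j _.
rewrite pp' ?qq' //; first by rewrite (leq_trans (leq_subr _ _) le_i_n).
by rewrite (leq_trans _ le_i_n) // -ltnS.
Qed.

Lemma eq_upto_sum m (F G : 'I_m -> {poly R}) : (forall j, eq_upto (F j) (G j)) ->
  eq_upto (\sum_(j < m) F j) (\sum_(j < m) G j).
Proof. by move=> FG i le_i_n; rewrite !coef_sum; apply: eq_bigr => j _; apply: FG. Qed.

Lemma eq_upto_prod m (F G : nat -> {poly R}) : (forall j, eq_upto (F j) (G j)) ->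
  eq_upto (\prod_(j < m) F j) (\prod_(j < m) G j).
Proof.
move=> FG; elim: m => [|m IH]; first by rewrite !big_ord0.
by rewrite !big_ord_recr; apply: eq_uptoM.
Qed.

Lemma eq_upto_Xn0 k : (0 < k)%N -> eq_upto 'X^(k * n.+1) 0.
Proof.
move=> k_gt0 i le_i_n; rewrite coefXn coef0; case: eqP => // def_i.
by move: le_i_n; rewrite def_i leqNgt (leq_trans (ltnSn n)) // leq_pmull.
Qed.

End Truncation.

Section GeometricFactors.

Variable R : comNzRingType.

Definition geom (k n : nat) : {poly R} := \sum_(i < n.+1) 'X^(k * i).

Definition geom_tail (k n : nat) : {poly R} := \sum_(i < n) 'X^(k * i.+1).

Lemma one_addX_geom k n :
  (1 + 'X^k) * geom k n = 1 + geom_tail k n *+ 2 + 'X^(k * n.+1).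
Proof.
have Xgeom : 'X^k * geom k n = geom_tail k n + 'X^(k * n.+1).
  rewrite /geom mulr_sumr big_ord_recr /= -exprD -mulnS; congr (_ + _).
  by apply: eq_bigr => i _; rewrite -exprD mulnS.
have geom_recl : geom k n = 1 + geom_tail k n by rewrite /geom big_ord_recl muln0 expr0.
by rewrite mulrDl mul1r Xgeom geom_recl mulr2n; ring.
Qed.

Hypothesis char4 : 4%:R = 0 :> R.

Lemma prod_one_add_double m (h : nat -> {poly R}) :
  \prod_(j < m) (1 + h j *+ 2) = 1 + (\sum_(j < m) h j) *+ 2.
Proof.
have four0 (p : {poly R}) : p *+ 4 = 0 by rewrite -mulr_natr -polyC_natr char4 mulr0.
elim: m => [|m IH]; first by rewrite !big_ord0 mul0rn addr0.
rewrite !big_ord_recr /= IH.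
set s := \sum_(i < m) h i.
have -> : (1 + s *+ 2) * (1 + h m *+ 2) = 1 + (s + h m) *+ 2 + (s * h m) *+ 4 by ring.
by rewrite four0 addr0.
Qed.

End GeometricFactors.

Lemma char4_Z4 : 4%:R = 0 :> 'Z_4.
Proof. exact: pchar_Zp. Qed.

Definition bterm4 (n m : nat) : {poly 'Z_4} :=
  'X^m * \prod_(j < m) (1 + 'X^(2 * j + 1)) * \prod_(j < m.+1) geom 'Z_4 (2 * j + 1) n.

Lemma b_Z4 n : (b n)%:~R = (\sum_(m < n.+1) bterm4 n m)`_n.
Proof.
have map_bterm m : map_poly intr ('X^m * negq_q2 m * inv_q_q2 m n) = bterm4 n m.
  rewrite !rmorphM /= rmorphXn /= map_polyX /negq_q2 /inv_q_q2 !rmorph_prod /=.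
  congr (_ * _ * _); apply: eq_bigr => j _.
    by rewrite rmorphD /= rmorphXn /= map_polyX rmorph1.
  by rewrite rmorph_sum; apply: eq_bigr => i _; rewrite rmorphXn /= map_polyX.
rewrite /b -(coef_map intr) rmorph_sum /=.
by under eq_bigr do rewrite map_bterm.
Qed.

Lemma bterm4_upto n m : eq_upto n (bterm4 n m)
  ('X^m * geom _ (2 * m + 1) n * (1 + (\sum_(j < m) geom_tail _ (2 * j + 1) n) *+ 2)).
Proof.
have -> : bterm4 n m = 'X^m * geom _ (2 * m + 1) n *
    \prod_(j < m) ((1 + 'X^(2 * j + 1)) * geom _ (2 * j + 1) n).
  by rewrite /bterm4 big_ord_recr big_split /=; ring.
apply: eq_uptoM => //.
rewrite -(prod_one_add_double char4_Z4 m (fun j => geom_tail _ (2 * j + 1) n)).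
apply: (@eq_upto_prod _ n m (fun j => (1 + 'X^(2 * j + 1)) * geom _ (2 * j + 1) n)
  (fun j => 1 + geom_tail _ (2 * j + 1) n *+ 2)) => j.
rewrite one_addX_geom -[X in eq_upto _ _ X]addr0.
by apply: eq_uptoD => //; apply: eq_upto_Xn0; rewrite addn1.
Qed.

Lemma coef_bterms4 n :
  (\sum_(m < n.+1) 'X^m * geom _ (2 * m + 1) n *
     (1 + (\sum_(j < m) geom_tail _ (2 * j + 1) n) *+ 2))`_n =
  (ndivpairs n + 2 * nquads n)%:R :> 'Z_4.
Proof.
rewrite -ndivpairsE -nquadsE natrD natrM mulr_natl !natr_sum -sumrMnl coef_sum.
rewrite -big_split /=; apply: eq_bigr => m _.
rewrite mulrDr mulr1 coefD mulrnAr coefMn; congr (_ + _).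
  rewrite /geom mulr_sumr coef_sum natr_sum; apply: eq_bigr => i _.
  by rewrite -exprD coefXn.
congr (_ *+ 2); rewrite mulr_sumr coef_sum natr_sum; apply: eq_bigr => j _.
rewrite /geom /geom_tail mulr_sumr coef_sum exchange_big natr_sum.
apply: eq_bigr => l _; rewrite mulr_sumr mulr_suml coef_sum natr_sum.
by apply: eq_bigr => i _; rewrite -!exprD coefXn.
Qed.

Lemma b_Z4_count n : (b n)%:~R = (ndivpairs n + 2 * nquads n)%:R :> 'Z_4.
Proof.
rewrite b_Z4 -coef_bterms4; apply: (@eq_upto_sum _ n) => [m|//].
exact: bterm4_upto.
Qed.

Lemma natr_Z4_eq0 (a : nat) : a%:R = 0 :> 'Z_4 -> (4 %| a)%N.
Proof. by move=> a0; move: (val_Zp_nat (p := 4) isT a); rewrite a0 /dvdn => <-. Qed.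

Lemma intr_Z4_eq (x y : int) : x%:~R = y%:~R :> 'Z_4 -> (x = y %[mod 4])%Z.
Proof.
move=> /eqP; rewrite -subr_eq0 -intrB => /eqP xy0.
apply/eqP; rewrite eqz_mod_dvd; move: (x - y) xy0 => [a|a] /=.
  by move/natr_Z4_eq0.
by rewrite NegzE mulrNz => /eqP; rewrite oppr_eq0 => /eqP /natr_Z4_eq0.
Qed.

Lemma b_even_Z4 N : (b (2 * N))%:~R = (issq (2 * (2 * N) + 1))%:R :> 'Z_4.
Proof.
have even_2N : ~~ odd (2 * N) by rewrite oddM.
have [W countW] := ndivpairs_nquads_mod4 even_2N.
by rewrite b_Z4_count countW natrD natrM char4_Z4 mul0r addr0.
Qed.

(* An odd [p] is [1] or [3] modulo 4, according to the parity of [p./2]. *)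
Lemma sign_odd_Z4 p : odd p -> (-1) ^+ p./2 * p%:R = 1 :> 'Z_4.
Proof.
move=> odd_p; rewrite {2}(odd_half_eq odd_p); set s := p./2.
rewrite -(odd_double_half s).
have -> : (2 * (odd s + s./2.*2) + 1 = 4 * s./2 + (2 * odd s + 1))%N by lia.
rewrite natrD natrM char4_Z4 mul0r add0r exprD -muln2 mulnC exprM sqrrN !expr1n mulr1.
case: (odd s); last by rewrite expr0 mul1r.
by rewrite expr1 mulN1r; apply/eqP.
Qed.

Lemma legendre_sq_mod (p a x : nat) : (0 < p)%N -> x ^ 2 = a %[mod p] -> legendre a p != -1.
Proof.
move=> p_gt0 xx_a; rewrite /legendre; case: ifP => // _.
suff -> : [exists y : 'I_p, y ^ 2 == a %[mod p]] by [].
by apply/existsP; exists (Ordinal (ltn_pmod x p_gt0)); rewrite /= modnXm xx_a.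
Qed.

Lemma b_nonresidue_mod4 (p l : nat) : (0 < p)%N -> legendre (4 * l + 1) p = -1 ->
  forall n : nat, (b (2 * (p * n + l)) = 0 %[mod 4])%Z.
Proof.
move=> p_gt0 leg_m1 n; apply: intr_Z4_eq; rewrite b_even_Z4.
case: issqP => // -[x xx].
have : x ^ 2 = 4 * l + 1 %[mod p].
  rewrite expnS expn1 xx (_ : _ + 1 = 4 * n * p + (4 * l + 1))%N ?modnMDl //; ring.
by move/(legendre_sq_mod p_gt0); rewrite leg_m1 eqxx.
Qed.

Lemma b_scale_Z4 q n : odd q ->
  (b (2 * (q * q * n + q./2 * q./2.+1)))%:~R = (b (2 * n))%:~R :> 'Z_4.
Proof.
move=> odd_q; have def_q := odd_half_eq odd_q; set h := q./2 in def_q *.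
have q_gt0 : (0 < q)%N by rewrite def_q addn1.
rewrite !b_even_Z4 -[issq (2 * (2 * n) + 1)](issq_mulsq _ q_gt0) def_q.
by congr (nat_of_bool (issq _))%:R; rewrite -[h.+1]addn1; ring.
Qed.

Lemma b_odd_power_mod4 p : odd p -> forall n k : nat,
  (b (2 * p ^ (2 * k + 2) * n + (p ^ (2 * k + 2) - 1) %/ 2)
     = (-1) ^+ ((k + 1) * (p - 1) %/ 2) * (p ^ (k + 1))%:Z * b (2 * n) %[mod 4])%Z.
Proof.
move=> odd_p n k; set q := (p ^ (k + 1))%N.
have odd_q : odd q by rewrite oddX odd_p orbT.
have def_q := odd_half_eq odd_q; set h := q./2 in def_q.
have -> : (2 * p ^ (2 * k + 2) * n + (p ^ (2 * k + 2) - 1) %/ 2 =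
           2 * (q * q * n + h * h.+1))%N.
  have -> : (p ^ (2 * k + 2) = q * q)%N by rewrite -expnD; congr (p ^ _)%N; ring.
  have -> : (q * q - 1 = 2 * (2 * (h * h.+1)))%N by rewrite def_q; nia.
  by rewrite mulKn //; ring.
have sign_p : (-1) ^+ ((k + 1) * (p - 1) %/ 2) * (q%:Z)%:~R = 1 :> 'Z_4.
  rewrite (odd_half_eq odd_p) addnK mulnCA mulKn //.
  by rewrite -pmulrn /q natrX mulnC exprM -exprMn sign_odd_Z4 // expr1n.
apply: intr_Z4_eq; rewrite !intrM b_scale_Z4 // intr_sign.
by rewrite sign_p mul1r.
Qed.

Theorem theorem1p5 :
  (forall (p l : nat), prime p -> odd p -> (1 <= l <= p - 1)%N ->
     legendre (4 * l + 1) p = -1 ->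
     forall n : nat, (b (2 * (p * n + l)) = 0 %[mod 4])%Z)
  /\
  (forall p : nat, prime p -> odd p ->
     forall n k : nat,
       (b (2 * p ^ (2 * k + 2) * n + (p ^ (2 * k + 2) - 1) %/ 2)
        = (-1) ^+ ((k + 1) * (p - 1) %/ 2) * (p ^ (k + 1))%:Z * b (2 * n) %[mod 4])%Z).
Proof.
split=> [p l p_pr _ _ | p _ odd_p]; last exact: b_odd_power_mod4.
exact: b_nonresidue_mod4 (prime_gt0 p_pr).
Qed.
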